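(* Let $R$ be an associative ring with identity and involution $*$, and let $a\in R^{\#}\cap R^{\dagger}$. Then $a\in R^{SEP}$ if and only if $a^{\dagger}a(a^{\dagger})^*a^{\dagger}\in PE(R)$.
   Context: An involution on $R$ is a map $x\mapsto x^*$ with $(x^* )^*=x$, $(x+y)^*=x^*+y^*$, $(xy)^*=y^*x^*$. An element $a$ is Moore–Penrose invertible if there is $b$ with $aba=a$, $bab=b$, $(ab)^*=ab$, $(ba)^*=ba$; such $b$ is unique, denoted $a^{\dagger}$, and $R^{\dagger}$ is the set of such $a$. An element $a$ is group invertible if there is $b$ with $aba=a$, $bab=b$, $ab=ba$; such $b$ is unique, denoted $a^{\#}$, and $R^{\#}$ is the set of such $a$. $PE(R)=\{e\in R: e^2=e=e^*\}$ is the set of projections. For $a\in R^{\#}\cap R^{\dagger}$, $a$ is SEP if $a^*=a^{\dagger}=a^{\#}$; $R^{SEP}$ denotes the set of SEP elements. *)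

From mathcomp Require Import all_boot all_algebra.
Set Implicit Arguments. Unset Strict Implicit. Unset Printing Implicit Defensive.
Import GRing.Theory.
Local Open Scope ring_scope.

Definition involution (R : nzRingType) (inv : R -> R) : Prop :=
  [/\ forall x, inv (inv x) = x,
      forall x y, inv (x + y) = inv x + inv y
    & forall x y, inv (x * y) = inv y * inv x].

Definition is_MP (R : nzRingType) (st : R -> R) (a b : R) : Prop :=
  [/\ a * b * a = a, b * a * b = b, st (a * b) = a * b & st (b * a) = b * a].

Definition is_group_inv (R : nzRingType) (a b : R) : Prop :=
  [/\ a * b * a = a, b * a * b = b & a * b = b * a].

Definition MP_invertible (R : nzRingType) (st : R -> R) (a : R) : Prop :=
  exists b, is_MP st a b.

Definition group_invertible (R : nzRingType) (a : R) : Prop :=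
  exists b, is_group_inv a b.

Definition projection (R : nzRingType) (st : R -> R) (e : R) : Prop :=
  e * e = e /\ e = st e.

(* a is SEP: a is group and MP invertible and a* = a^dagger = a^#.
   Since MP and group inverses are unique, this says a* is both the
   MP inverse and the group inverse of a. *)
Definition SEP (R : nzRingType) (st : R -> R) (a : R) : Prop :=
  [/\ group_invertible a, MP_invertible st a,
      is_MP st a (st a) & is_group_inv a (st a)].

(* Write b = a^dagger, e = b a, f = a b and k = (a^dagger)^* a^dagger, the
   Moore-Penrose inverse of a a^*, so that the element in question is e k.
   If e k is self-adjoint then e commutes with k; since f k = k and
   k a a^* = f, this forces e f = f e f, and taking adjoints e f = f e.
   For group invertible a, commuting idempotents b a and a b coincide: a is EP.
   Then e k = k is idempotent with a a^* k = f, whence k = f and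
   (a^dagger)^* = k a = a, i.e. a^* = a^dagger = a^#.  Conversely, if
   a^* = a^dagger = a^# the element is a^dagger a a a^dagger = a a^dagger. *)

From mathcomp Require Import all_boot all_algebra.
Set Implicit Arguments. Unset Strict Implicit. Unset Printing Implicit Defensive.
Local Open Scope ring_scope.
Import GRing.Theory.

Lemma commuting_idempotents_eq (R : nzRingType) (e f q q' : R) :
  e * e = e -> f * f = f -> e * f = f * e ->
  e * f * q = e -> q' * e * f = f -> e = f.
Proof.
move=> ee ff ef efq qef.
have fe_e : f * e = e by rewrite -{1}efq ef !mulrA ff -ef efq.
have fe_f : f * e = f by rewrite -{1}qef -mulrA -ef mulrA -(mulrA q') ee qef.
by rewrite -fe_e fe_f.
Qed.

Lemma EP_of_commuting_idempotents (R : nzRingType) (a b g : R) :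
  a * b * a = a -> is_group_inv a g ->
  b * a * (a * b) = a * b * (b * a) -> b * a = a * b.
Proof.
move=> aba [aga _ ag_ga] ef_fe.
have aag : a * (a * g) = a by rewrite ag_ga mulrA aga.
have gaa : g * a * a = a by rewrite -ag_ga aga.
apply: (commuting_idempotents_eq (q := a * g) (q' := g * a)) => //.
- by rewrite mulrA -[b * a * b]mulrA -mulrA aba.
- by rewrite mulrA aba.
- by rewrite -mulrA [a * b * (a * g)]mulrA aba -mulrA aag.
- by rewrite [g * a * (b * a)]mulrA -(mulrA g a b) -(mulrA g) aba mulrA gaa.
Qed.

Section MoorePenrose.

Variables (R : nzRingType) (st : R -> R).
Hypothesis st_inv : involution st.

Section MPInverse.

Variables a b : R.
Hypothesis abMP : is_MP st a b.

Lemma MP_uniq b' : is_MP st a b' -> b' = b.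
Proof.
have [_ _ stM] := st_inv; have [aba bab ab_sa ba_sa] := abMP.
case=> ab'a b'ab' ab'_sa b'a_sa.
have stab' : st a * (a * b') = st a by rewrite -ab'_sa -stM ab'a.
have stba : b * a * st a = st a by rewrite -ba_sa -stM mulrA aba.
have b_eq : b = b * a * b'.
  transitivity (b * st (a * b) * (a * b')).
    by rewrite stM -!mulrA stab' -stM ab_sa mulrA bab.
  by rewrite ab_sa !mulrA bab.
have b'_eq : b' = b * a * b'.
  transitivity (b * a * st (b' * a) * b').
    by rewrite stM !mulrA stba -stM b'a_sa b'ab'.
  by rewrite b'a_sa -mulrA b'ab'.
by rewrite b_eq -b'_eq.
Qed.

Lemma MP_projection_l : projection st (a * b).
Proof. by have [aba _ ab_sa _] := abMP; rewrite /projection mulrA aba ab_sa. Qed.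

Lemma MP_lproj_mul_adj : a * b * (st b * b) = st b * b.
Proof.
have [_ _ stM] := st_inv; have [_ bab ab_sa _] := abMP.
by rewrite mulrA -ab_sa -stM mulrA bab.
Qed.

Lemma MP_adj_mul_rproj : st b * (b * a) = st b.
Proof.
have [_ _ stM] := st_inv; have [_ bab _ ba_sa] := abMP.
by rewrite -ba_sa -stM bab.
Qed.

Lemma MP_gram_mul_adj : a * st a * (st b * b) = a * b.
Proof.
have [_ _ stM] := st_inv; have [_ bab _ ba_sa] := abMP.
by rewrite -mulrA (mulrA (st a)) -stM ba_sa bab.
Qed.

Lemma MP_adj_mul_gram : st b * b * (a * st a) = a * b.
Proof.
have [_ _ stM] := st_inv; have [_ _ ab_sa _] := abMP.
by rewrite mulrA -(mulrA (st b)) MP_adj_mul_rproj -stM ab_sa.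
Qed.

Lemma EP_of_projection :
  projection st (b * a * st b * b) -> group_invertible a -> b * a = a * b.
Proof.
have [stK _ stM] := st_inv; have [aba _ ab_sa ba_sa] := abMP.
case=> _ p_sa [g a_g].
have ek_ke : b * a * (st b * b) = st b * b * (b * a).
  by move: p_sa; rewrite -[b * a * st b * b]mulrA stM stM stK ba_sa.
have ek : b * a * (st b * b) = a * b * (b * a) * (st b * b).
  by rewrite ek_ke -{1}MP_lproj_mul_adj -mulrA -ek_ke mulrA.
have ef : b * a * (a * b) = a * b * (b * a) * (a * b).
  transitivity (b * a * (st b * b) * (a * st a)).
    by rewrite -[in RHS]mulrA MP_adj_mul_gram.
  by rewrite ek -mulrA MP_adj_mul_gram.
have fe : a * b * (b * a) = a * b * (b * a) * (a * b).
  have := congr1 st ef.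
  rewrite (stM (b * a)) (stM (a * b * (b * a))) (stM (a * b)) ab_sa ba_sa.
  by move=> fe; rewrite {1}fe mulrA.
by apply: EP_of_commuting_idempotents aba a_g _; rewrite ef -fe.
Qed.

Lemma adj_MP_of_projection :
  projection st (b * a * st b * b) -> b * a = a * b -> st b = a.
Proof.
have [aba _ _ _] := abMP.
case=> p_idem _ ba_ab.
have p_k : b * a * st b * b = st b * b by rewrite -mulrA ba_ab MP_lproj_mul_adj.
rewrite p_k in p_idem.
have k_f : st b * b = a * b.
  by rewrite -MP_lproj_mul_adj -{1}MP_gram_mul_adj -mulrA p_idem MP_gram_mul_adj.
by rewrite -MP_adj_mul_rproj mulrA k_f aba.
Qed.

End MPInverse.
End MoorePenrose.

Theorem theorem2p2 (R : nzRingType) (st : R -> R) (a adag : R) :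
  involution st ->
  group_invertible a ->
  is_MP st a adag ->
  (SEP st a <-> projection st (adag * a * st adag * adag)).
Proof.
move=> st_inv a_grp abMP; have [stK _ _] := st_inv; have [aba bab _ _] := abMP.
split.
- case=> _ _ a_sa_MP [_ _ a_sa_comm].
  have sa : st a = adag := MP_uniq st_inv abMP a_sa_MP.
  have -> : st adag = a by rewrite -sa stK.
  by rewrite sa in a_sa_comm; rewrite -a_sa_comm aba; apply: MP_projection_l.
- move=> p_proj.
  have ba_ab := EP_of_projection st_inv abMP p_proj a_grp.
  have sb : st adag = a := adj_MP_of_projection st_inv abMP p_proj ba_ab.
  have sa : st a = adag by rewrite -sb stK.
  by rewrite /SEP sa; split=> //; exists adag.
Qed.
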